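(* Let $(a_n)_{n\ge 1}$ be a sequence of strictly positive real numbers with $\sum_{n\ge1}(1+n^2)^5a_n^2<\infty$. Let $H=\mathbb{R}\times l^2\times l^2$ and let $F:H\to H$ be defined, for $y=(x,(u_n)_{n\ge1},(v_n)_{n\ge1})\in H$, by $$F(y)=\Big(\sum_{n\ge1} n a_n^{1/2}\big(\sin(nx)u_n+\cos(nx)v_n\big),\ \big(a_n^{1/2}\cos(nx)\big)_{n\ge1},\ \big(-a_n^{1/2}\sin(nx)\big)_{n\ge1}\Big).$$ Let $W$ be a cylindrical Wiener process on $H$ and $\sigma$ the projection onto the first coordinate. For $N\ge1$ define $\Pi_N:H\to H$ by $\Pi_N(x,(u_n)_n,(v_n)_n)=(x,(u_1,\dots,u_N,0,0,\dots),(v_1,\dots,v_N,0,0,\dots))$. Fix $y\in H$, let $Y$ be the strong solution of $dY_t=F(Y_t)\,dt+\sigma\,dW_t$, $Y_0=y$, and let $Y^{(N)}$ be the strong solution of the (finite-dimensional) equation $dY^{(N)}_t=\Pi_N F(Y^{(N)}_t)\,dt+\sigma\,dW_t$, $Y^{(N)}_0=\Pi_N y$, driven by the same $W$. Then for all $T>0$ and all $\omega\in\Omega$, $$\lim_{N\to\infty}\sup_{0\le t\le T}\|Y^{(N)}(t)-Y(t)\|_H^2=0.$$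
   Context: $H=\mathbb{R}\times l^2\times l^2$ is the Hilbert space with norm $\|y\|_H^2=|x|^2+\|(u_n)_n\|_{l^2}^2+\|(v_n)_n\|_{l^2}^2$. $\sigma W_t=(\beta_t,0,0)$ with $\beta$ a standard one-dimensional Brownian motion. The equation for $Y^{(N)}$ lives in $\mathbb{R}\times\mathbb{R}^N\times\mathbb{R}^N$ (identified with a subspace of $H$) and has a unique strong solution. *)

From Stdlib Require Import Reals Lra.
From Coquelicot Require Import Coquelicot.
Open Scope R_scope.

(* Indexing convention: a sequence (w_n)_{n>=1} is represented by
   w : nat -> R with w k standing for w_{k+1}.  So the paper's index n
   corresponds to k = n - 1, and the factor n is INR (S k). *)
Definition idx (k : nat) : R := INR (S k).

Definition in_l2 (w : nat -> R) : Prop := ex_series (fun k => (w k) ^ 2).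

Definition in_H (x : R) (u v : nat -> R) : Prop := in_l2 u /\ in_l2 v.

Definition Hdist2 (x : R) (u v : nat -> R) (x' : R) (u' v' : nat -> R) : R :=
  (x - x') ^ 2 + Series (fun k => (u k - u' k) ^ 2)
               + Series (fun k => (v k - v' k) ^ 2).

Definition F1 (a : nat -> R) (x : R) (u v : nat -> R) : R :=
  Series (fun k => idx k * sqrt (a k) *
                   (sin (idx k * x) * u k + cos (idx k * x) * v k)).
Definition F2 (a : nat -> R) (x : R) (k : nat) : R := sqrt (a k) * cos (idx k * x).
Definition F3 (a : nat -> R) (x : R) (k : nat) : R := - (sqrt (a k) * sin (idx k * x)).

(* truncation by Pi_N on a sequence component: keeps indices n = 1..N,
   i.e. k < N *)
Definition trunc (N : nat) (w : nat -> R) : nat -> R :=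
  fun k => if (k <? N)%nat then w k else 0.

Definition H_path_continuous (X : R -> R) (U V : R -> nat -> R) : Prop :=
  (forall t, 0 <= t -> in_H (X t) (U t) (V t)) /\
  (forall t, 0 <= t -> forall eps, 0 < eps -> exists delta, 0 < delta /\
     forall s, 0 <= s -> Rabs (s - t) < delta ->
       Hdist2 (X s) (U s) (V s) (X t) (U t) (V t) < eps).

(* Pathwise (strong) solution, for the given noise path beta, of
     dY = P(F(Y)) dt + sigma dW,  Y_0 = (x0,u0,v0),
   where sigma W_t = (beta_t, 0, 0) and P is either the identity
   (full = None) or Pi_N (full = Some N).  With additive noise the
   equation is the integral equation
     Y_t = Y_0 + \int_0^t P F(Y_s) ds + (beta_t,0,0),
   written coordinatewise (the coordinate functionals separate H). *)
Definition proj_coord (P : option nat) (k : nat) (r : R) : R :=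
  match P with None => r | Some N => if (k <? N)%nat then r else 0 end.

Definition is_solution (a : nat -> R) (P : option nat) (beta : R -> R)
  (x0 : R) (u0 v0 : nat -> R) (X : R -> R) (U V : R -> nat -> R) : Prop :=
  H_path_continuous X U V /\
  X 0 = x0 /\ (forall k, U 0 k = u0 k) /\ (forall k, V 0 k = v0 k) /\
  (forall t, 0 <= t ->
     ex_RInt (fun s => F1 a (X s) (U s) (V s)) 0 t /\
     X t = x0 + RInt (fun s => F1 a (X s) (U s) (V s)) 0 t + beta t) /\
  (forall t k, 0 <= t ->
     ex_RInt (fun s => proj_coord P k (F2 a (X s) k)) 0 t /\
     U t k = u0 k + RInt (fun s => proj_coord P k (F2 a (X s) k)) 0 t) /\
  (forall t k, 0 <= t ->
     ex_RInt (fun s => proj_coord P k (F3 a (X s) k)) 0 t /\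
     V t k = v0 k + RInt (fun s => proj_coord P k (F3 a (X s) k)) 0 t).

From Stdlib Require Import Reals Lra Lia.
From Coquelicot Require Import Coquelicot.
Open Scope R_scope.

(* The first coordinate e = X - X^N of the error solves e(t) = int_0^t (F1(Y) - F1(Y^N)),
   while the sequence coordinates are driven by x alone: for n <= N the coordinates of Y and
   Y^N differ by at most t n sqrt(a_n) sup|e|, and for n > N those of Y^N vanish while those
   of Y stay below |u_n(0)| + sqrt(a_n) T.  Hence the terms of F1 along either solution are
   dominated by a summable majorant m_n (summability uses sum n^4 a_n < oo, a consequence of
   the hypothesis), and |F1(Y) - F1(Y^N)| <= (sum m) sup|e| + sum_{n>N} m_n.  Gronwall's
   lemma gives sup_[0,T] |e| <= 2 T e^{(2 sum m + 1) T} sum_{n>N} m_n, and every other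
   contribution to the H-distance is a multiple of this or the tail of a convergent series. *)

Lemma ex_series_Rplus (f g : nat -> R) :
  ex_series f -> ex_series g -> ex_series (fun k => f k + g k).
Proof. exact (ex_series_plus (V := R_NormedModule) f g). Qed.

Lemma ex_series_nonneg_le (f b : nat -> R) :
  (forall k, 0 <= f k <= b k) -> ex_series b -> ex_series f.
Proof.
  intros Hfb. apply (ex_series_le (V := R_CompleteNormedModule)).
  intro k. destruct (Hfb k). change (Rabs (f k) <= b k). rewrite Rabs_pos_eq; lra.
Qed.

Lemma Series_abs_le (f b : nat -> R) :
  (forall k, Rabs (f k) <= b k) -> ex_series b ->
  ex_series f /\ Rabs (Series f) <= Series b.
Proof.
  intros Hfb Hb.
  assert (Habs : ex_series (fun k => Rabs (f k))).
  { apply (ex_series_nonneg_le _ b); auto. intro k; split; auto using Rabs_pos. }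
  split; [now apply ex_series_Rabs|].
  eapply Rle_trans; [now apply Series_Rabs|].
  apply Series_le; auto. intro k; split; auto using Rabs_pos.
Qed.

Lemma Series_nonneg (b : nat -> R) :
  (forall k, 0 <= b k) -> ex_series b -> 0 <= Series b.
Proof.
  intros Hb Hbs. replace 0 with (0 * Series b) by ring.
  rewrite <- Series_scal_l. apply Series_le; auto.
  intro k; specialize (Hb k); lra.
Qed.

Lemma Series_abs_le_scal_plus (f p q : nat -> R) (c : R) :
  (forall k, Rabs (f k) <= p k * c + q k) -> ex_series p -> ex_series q ->
  Rabs (Series f) <= Series p * c + Series q.
Proof.
  intros Hf Hp Hq.
  assert (Hpc : ex_series (fun k => p k * c)) by now apply ex_series_scal_r.
  rewrite <- Series_scal_r, <- Series_plus by auto.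
  apply Series_abs_le; auto. now apply ex_series_Rplus.
Qed.

Definition tail (N : nat) (d : nat -> R) : nat -> R :=
  fun k => if (k <? N)%nat then 0 else d k.

Lemma tail_lt N d k : (k < N)%nat -> tail N d k = 0.
Proof. intros Hk. unfold tail. now rewrite (proj2 (Nat.ltb_lt k N) Hk). Qed.

Lemma tail_ge N d k : (N <= k)%nat -> tail N d k = d k.
Proof. intros Hk. unfold tail. now rewrite (proj2 (Nat.ltb_ge k N) Hk). Qed.

Lemma tail_le N d k : (forall k, 0 <= d k) -> 0 <= tail N d k <= d k.
Proof. intros Hd; unfold tail; destruct (k <? N)%nat; specialize (Hd k); lra. Qed.

Lemma ex_series_tail N d : ex_series d -> ex_series (tail N d).
Proof.
  intros Hd. apply (ex_series_incr_n (V := R_NormedModule) _ N).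
  apply (ex_series_ext (V := R_NormedModule) (fun k => d (N + k)%nat)).
  - intro k; symmetry; apply tail_ge; lia.
  - now apply (ex_series_incr_n (V := R_NormedModule)).
Qed.

Lemma Series_tail N d : ex_series d ->
  Series (tail (S N) d) = Series d - sum_f_R0 d N.
Proof.
  intros Hd. rewrite (Series_incr_n d (S N)) by (auto; lia).
  rewrite (Series_incr_n_aux (tail (S N) d) (S N)).
  - rewrite (Series_ext _ (fun k => d (S N + k)%nat)) by (intro k; apply tail_ge; lia). simpl; ring.
  - intros k Hk. now apply tail_lt.
Qed.

Lemma is_lim_seq_Series_tail d : ex_series d -> is_lim_seq (fun N => Series (tail N d)) 0.
Proof.
  intros Hd. apply is_lim_seq_incr_1.
  apply (is_lim_seq_ext (fun N => Series d - sum_f_R0 d N)).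
  { intro N; symmetry; now apply Series_tail. }
  replace 0 with (Series d - Series d) by ring.
  apply is_lim_seq_minus'; [apply is_lim_seq_const|].
  apply is_lim_seq_Reals, is_series_Reals, Series_correct, Hd.
Qed.

Lemma idx_S k : idx (S k) = idx k + 1.
Proof. unfold idx. now rewrite S_INR. Qed.

Lemma idx_ge1 k : 1 <= idx k.
Proof. unfold idx. rewrite S_INR. pose proof (pos_INR k). lra. Qed.

Lemma ex_series_inv_idx_sq : ex_series (fun k => / idx k ^ 2).
Proof.
  set (f := fun k => / idx k ^ 2).
  assert (Hf : forall k, 0 < f k).
  { intro k. unfold f. pose proof (idx_ge1 k). apply Rinv_0_lt_compat. nra. }
  assert (Hsum : forall n, sum_f_R0 f n <= 2 - / idx n).
  { induction n as [|n IH].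
    - simpl. unfold f, idx. simpl. lra.
    - simpl. rewrite idx_S. unfold f at 2. rewrite idx_S.
      pose proof (idx_ge1 n). set (m := idx n) in *.
      assert (/ (m + 1) ^ 2 <= / m - / (m + 1)).
      { replace (/ m - / (m + 1)) with (/ (m * (m + 1))) by (field; lra).
        apply Rinv_le_contravar; nra. }
      lra. }
  destruct (growing_cv (sum_f_R0 f)) as [l Hl].
  - intro n. simpl. specialize (Hf (S n)). lra.
  - exists 2. intros x [n ->]. specialize (Hsum n).
    assert (0 < / idx n) by (apply Rinv_0_lt_compat; pose proof (idx_ge1 n); lra). lra.
  - exists l. now apply is_series_Reals.
Qed.

Lemma Rabs_sin_le_1 x : Rabs (sin x) <= 1.
Proof. apply Rabs_le. apply SIN_bound. Qed.

Lemma Rabs_cos_le_1 x : Rabs (cos x) <= 1.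
Proof. apply Rabs_le. apply COS_bound. Qed.

Lemma Rabs_sin_sub_le x y : Rabs (sin x - sin y) <= Rabs (x - y).
Proof.
  destruct (MVT_abs sin cos y x) as [c [-> _]].
  - intros; apply derivable_pt_lim_sin.
  - rewrite <- (Rmult_1_l (Rabs (x - y))) at 2.
    apply Rmult_le_compat_r; [apply Rabs_pos|apply Rabs_cos_le_1].
Qed.

Lemma Rabs_cos_sub_le x y : Rabs (cos x - cos y) <= Rabs (x - y).
Proof.
  destruct (MVT_abs cos (fun t => - sin t) y x) as [c [-> _]].
  - intros; apply derivable_pt_lim_cos.
  - rewrite <- (Rmult_1_l (Rabs (x - y))) at 2.
    apply Rmult_le_compat_r; [apply Rabs_pos|]. rewrite Rabs_Ropp. apply Rabs_sin_le_1.
Qed.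

Lemma Rabs_RInt_le_RInt (f g : R -> R) t :
  0 <= t -> ex_RInt f 0 t -> ex_RInt g 0 t ->
  (forall r, 0 <= r <= t -> Rabs (f r) <= g r) -> Rabs (RInt f 0 t) <= RInt g 0 t.
Proof.
  intros Ht Hf Hg Hfg.
  assert (Hbetween : forall r, 0 <= r <= t -> - g r <= f r <= g r).
  { intros r Hr. now apply Rabs_le_between, Hfg. }
  assert (Hopp : ex_RInt (fun r => - g r) 0 t) by exact (ex_RInt_opp (V := R_NormedModule) g 0 t Hg).
  apply Rabs_le. split.
  - replace (- RInt g 0 t) with (RInt (fun r => - g r) 0 t)
      by exact (RInt_opp (V := R_CompleteNormedModule) g 0 t Hg).
    apply RInt_le; auto. intros r Hr; apply Hbetween; lra.
  - apply RInt_le; auto. intros r Hr; apply Hbetween; lra.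
Qed.

Lemma Rabs_add_RInt_le (w0 M t : R) (f : R -> R) :
  0 <= t -> ex_RInt f 0 t -> (forall s, 0 <= s <= t -> Rabs (f s) <= M) ->
  Rabs (w0 + RInt f 0 t) <= Rabs w0 + t * M.
Proof.
  intros Ht Hf HM. eapply Rle_trans; [apply Rabs_triang|].
  pose proof (abs_RInt_le_const f 0 t M Ht Hf HM). lra.
Qed.

Lemma Rabs_RInt_sub_le (L t : R) (f g : R -> R) :
  0 <= t -> ex_RInt f 0 t -> ex_RInt g 0 t ->
  (forall s, 0 <= s <= t -> Rabs (f s - g s) <= L) ->
  Rabs (RInt f 0 t - RInt g 0 t) <= t * L.
Proof.
  intros Ht Hf Hg HL.
  replace (RInt f 0 t - RInt g 0 t) with (RInt (fun s => f s - g s) 0 t)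
    by exact (RInt_minus (V := R_CompleteNormedModule) f g 0 t Hf Hg).
  replace t with (t - 0) at 2 by ring.
  apply abs_RInt_le_const; auto. exact (ex_RInt_minus (V := R_NormedModule) f g 0 t Hf Hg).
Qed.

Lemma is_RInt_exp_mult lam t : 0 < lam ->
  is_RInt (fun r => exp (lam * r)) 0 t ((exp (lam * t) - 1) / lam).
Proof.
  intros Hlam.
  replace ((exp (lam * t) - 1) / lam) with (exp (lam * t) / lam - exp (lam * 0) / lam)
    by (rewrite Rmult_0_r, exp_0; field; lra).
  apply (is_RInt_derive (fun r => exp (lam * r) / lam)).
  - intros r _. auto_derive; auto. field. lra.
  - intros r _. apply (ex_derive_continuous (fun r => exp (lam * r))). auto_derive. auto.
Qed.

Lemma exp_ge_1 x : 0 <= x -> 1 <= exp x.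
Proof. intros. pose proof (exp_ineq1_le x). lra. Qed.

Lemma exp_le x y : x <= y -> exp x <= exp y.
Proof. intros [Hlt | ->]; [left; now apply exp_increasing|lra]. Qed.

(* Gronwall's inequality in the form needed when the bound on the integrand
   depends on the whole past of [e]: in the weighted norm sup |e s| e^{-lam s}
   with lam = 2C+1 the integral operator contracts by a factor 1/2. *)
Section Weighted_gronwall.

Variables (T C tau : R) (e D : R -> R).
Hypotheses (HT : 0 <= T) (HC : 0 <= C) (Htau : 0 <= tau).
Let lam := 2 * C + 1.
Hypothesis e_RInt : forall t, 0 <= t <= T -> ex_RInt D 0 t /\ e t = RInt D 0 t.
Hypothesis D_bound : forall G, 0 <= G ->
  (forall s, 0 <= s <= T -> Rabs (e s) <= G * exp (lam * s)) ->
  forall r, 0 <= r <= T -> Rabs (D r) <= C * G * exp (lam * r) + tau.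

Lemma weighted_bound_contract G : 0 <= G ->
  (forall s, 0 <= s <= T -> Rabs (e s) <= G * exp (lam * s)) ->
  forall t, 0 <= t <= T -> Rabs (e t) <= (G / 2 + T * tau) * exp (lam * t).
Proof.
  intros HG He t Ht.
  assert (Hlam : 0 < lam) by (unfold lam; lra).
  destruct (e_RInt t Ht) as [HD ->].
  set (g := fun r => C * G * exp (lam * r) + tau).
  assert (Hg : is_RInt g 0 t (C * G * ((exp (lam * t) - 1) / lam) + (t - 0) * tau)).
  { apply (is_RInt_plus (V := R_NormedModule)).
    - apply (is_RInt_scal (V := R_NormedModule)). now apply is_RInt_exp_mult.
    - apply (is_RInt_const (V := R_NormedModule)). }
  eapply Rle_trans.
  { apply (Rabs_RInt_le_RInt D g t); try lra; auto; [eexists; exact Hg|].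
    intros r Hr; apply D_bound; auto; lra. }
  rewrite (is_RInt_unique _ _ _ _ Hg).
  assert (HE : 1 <= exp (lam * t)) by (apply exp_ge_1; apply Rmult_le_pos; lra).
  set (E := exp (lam * t)) in *.
  assert (Hcontract : C * G * ((E - 1) / lam) <= G / 2 * E).
  { replace (C * G * ((E - 1) / lam)) with ((C / lam) * (G * (E - 1))) by (field; lra).
    assert (C / lam <= 1 / 2) by (apply Rmult_le_reg_r with lam; auto; unfold lam; field_simplify; lra).
    assert (0 <= G * (E - 1)) by (apply Rmult_le_pos; lra).
    assert (0 <= C / lam) by (apply Rdiv_le_0_compat; lra). nra. }
  assert (t * tau <= T * tau) by (apply Rmult_le_compat_r; lra).
  assert (T * tau <= T * tau * E) by (pose proof (Rmult_le_pos T tau HT Htau); nra).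
  lra.
Qed.

Lemma weighted_bound_iterate G0 : 0 <= G0 ->
  (forall t, 0 <= t <= T -> Rabs (e t) <= G0) ->
  forall m t, 0 <= t <= T -> Rabs (e t) <= (G0 * (/ 2) ^ m + 2 * T * tau) * exp (lam * t).
Proof.
  intros HG0 He0. induction m as [|m IH]; intros t Ht.
  - assert (HE : 1 <= exp (lam * t)) by (apply exp_ge_1; apply Rmult_le_pos; unfold lam; lra).
    specialize (He0 t Ht). pose proof (Rmult_le_pos T tau HT Htau). simpl. nra.
  - assert (HGm : 0 <= G0 * (/ 2) ^ m + 2 * T * tau).
    { pose proof (pow_le (/ 2) m ltac:(lra)). pose proof (Rmult_le_pos T tau HT Htau). nra. }
    eapply Rle_trans; [apply (weighted_bound_contract _ HGm IH t Ht)|].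
    right. simpl. field.
Qed.

Lemma weighted_gronwall G0 : 0 <= G0 ->
  (forall t, 0 <= t <= T -> Rabs (e t) <= G0) ->
  forall t, 0 <= t <= T -> Rabs (e t) <= 2 * T * tau * exp (lam * t).
Proof.
  intros HG0 He0 t Ht.
  assert (Hlim : is_lim_seq (fun m => (G0 * (/ 2) ^ m + 2 * T * tau) * exp (lam * t))
                            ((G0 * 0 + 2 * T * tau) * exp (lam * t))).
  { apply is_lim_seq_mult'; [|apply is_lim_seq_const].
    apply is_lim_seq_plus'; [|apply is_lim_seq_const].
    apply is_lim_seq_mult'; [apply is_lim_seq_const|].
    apply is_lim_seq_geom. rewrite Rabs_pos_eq; lra. }
  pose proof (is_lim_seq_le _ _ _ _ (fun m => weighted_bound_iterate G0 HG0 He0 m t Ht)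
                (is_lim_seq_const (Rabs (e t))) Hlim) as Hle.
  simpl in Hle. lra.
Qed.

End Weighted_gronwall.

Lemma trunc_ge N w k : (N <= k)%nat -> trunc N w k = 0.
Proof. intros Hk. unfold trunc. now rewrite (proj2 (Nat.ltb_ge k N) Hk). Qed.

Lemma Rabs_trunc_le N w k : Rabs (trunc N w k) <= Rabs (w k).
Proof. unfold trunc. destruct (k <? N)%nat; rewrite ?Rabs_R0; auto using Rabs_pos, Rle_refl. Qed.

Lemma proj_coord_ge N k r : (N <= k)%nat -> proj_coord (Some N) k r = 0.
Proof. intros Hk. simpl. now rewrite (proj2 (Nat.ltb_ge k N) Hk). Qed.

Lemma Rabs_proj_coord_le P k r : Rabs (proj_coord P k r) <= Rabs r.
Proof.
  destruct P as [N|]; simpl; [|apply Rle_refl].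
  destruct (k <? N)%nat; rewrite ?Rabs_R0; auto using Rabs_pos, Rle_refl.
Qed.

(* Termwise Cauchy-Schwarz: n^4 a_n <= (n^10 a_n^2 + n^-2) / 2. *)
Lemma ex_series_idx4_mul (a : nat -> R) : (forall k, 0 <= a k) ->
  ex_series (fun k => (1 + idx k ^ 2) ^ 5 * a k ^ 2) -> ex_series (fun k => idx k ^ 4 * a k).
Proof.
  intros Ha Hs.
  apply (ex_series_nonneg_le _ (fun k => (1 + idx k ^ 2) ^ 5 * a k ^ 2 + / idx k ^ 2));
    [|apply ex_series_Rplus; auto using ex_series_inv_idx_sq].
  intro k. pose proof (idx_ge1 k) as Hn. pose proof (Ha k) as Hak.
  set (n := idx k) in *. split; [apply Rmult_le_pos; [apply pow_le|]; lra|].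
  assert (Hpow : n ^ 10 <= (1 + n ^ 2) ^ 5).
  { replace (n ^ 10) with ((n ^ 2) ^ 5) by ring. apply pow_incr. split; [apply pow_le|]; lra. }
  assert (Hamgm : 2 * (n ^ 5 * a k) * / n <= (n ^ 5 * a k) ^ 2 + (/ n) ^ 2)
    by (pose proof (pow2_ge_0 (n ^ 5 * a k - / n)); nra).
  replace (n ^ 4 * a k) with ((n ^ 5 * a k) * / n) by (field; lra).
  replace (/ n ^ 2) with ((/ n) ^ 2) by (field; lra).
  assert (n ^ 10 * a k ^ 2 <= (1 + n ^ 2) ^ 5 * a k ^ 2)
    by (apply Rmult_le_compat_r; [apply pow2_ge_0|auto]).
  assert (0 <= n ^ 5 * a k * / n).
  { apply Rmult_le_pos; [apply Rmult_le_pos; [apply pow_le|]|apply Rlt_le, Rinv_0_lt_compat]; lra. }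
  nra.
Qed.

Section Drift.

Variable a : nat -> R.
Hypothesis a_pos : forall k, 0 < a k.
Hypothesis ex_series_idx4_a : ex_series (fun k => idx k ^ 4 * a k).

Let sqrt_a_nonneg k : 0 <= sqrt (a k) := sqrt_pos (a k).
Let sqrt_a_sq k : sqrt (a k) ^ 2 = a k := pow2_sqrt (a k) (Rlt_le _ _ (a_pos k)).

Definition coord_bound (w0 : nat -> R) (T : R) (k : nat) : R :=
  Rabs (w0 k) + sqrt (a k) * T.

Definition drift_majorant (u0 v0 : nat -> R) (T : R) (k : nat) : R :=
  idx k ^ 2 * sqrt (a k) * (coord_bound u0 T k + coord_bound v0 T k + 2 * sqrt (a k) * T).

Definition F1_term (x : R) (u v : nat -> R) (k : nat) : R :=
  idx k * sqrt (a k) * (sin (idx k * x) * u k + cos (idx k * x) * v k).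

Lemma F1_Series x u v : F1 a x u v = Series (F1_term x u v).
Proof. reflexivity. Qed.

Lemma ex_series_a : ex_series a.
Proof.
  apply (ex_series_nonneg_le _ _) with (2 := ex_series_idx4_a).
  intros k. split; [now apply Rlt_le|].
  pose proof (pow_R1_Rle _ 4 (idx_ge1 k)). pose proof (a_pos k). nra.
Qed.

Lemma coord_bound_nonneg w0 T k : 0 <= T -> 0 <= coord_bound w0 T k.
Proof.
  intros HT. unfold coord_bound. pose proof (Rabs_pos (w0 k)). pose proof (sqrt_a_nonneg k). nra.
Qed.

Lemma ex_series_coord_bound_sq w0 T : in_l2 w0 -> ex_series (fun k => coord_bound w0 T k ^ 2).
Proof.
  intros Hw.
  apply (ex_series_nonneg_le _ (fun k => w0 k ^ 2 * 2 + a k * (2 * T ^ 2))).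
  - intro k. split; [apply pow2_ge_0|]. unfold coord_bound.
    pose proof (sqrt_a_sq k) as Hs. set (s := sqrt (a k)) in *.
    rewrite <- (pow2_abs (w0 k)), <- Hs. pose proof (pow2_ge_0 (Rabs (w0 k) - s * T)). nra.
  - apply ex_series_Rplus; apply ex_series_scal_r; auto using ex_series_a.
Qed.

Lemma drift_majorant_nonneg u0 v0 T k : 0 <= T -> 0 <= drift_majorant u0 v0 T k.
Proof.
  intros HT. unfold drift_majorant.
  pose proof (coord_bound_nonneg u0 T k HT). pose proof (coord_bound_nonneg v0 T k HT).
  pose proof (sqrt_a_nonneg k). pose proof (pow2_ge_0 (idx k)).
  apply Rmult_le_pos; [apply Rmult_le_pos|]; nra.
Qed.

Lemma ex_series_drift_majorant u0 v0 T : 0 <= T -> in_l2 u0 -> in_l2 v0 ->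
  ex_series (drift_majorant u0 v0 T).
Proof.
  intros HT Hu Hv.
  apply (ex_series_nonneg_le _ (fun k => idx k ^ 4 * a k * (1 + 4 * T) + (u0 k ^ 2 + v0 k ^ 2))).
  - intro k. split; [now apply drift_majorant_nonneg|].
    unfold drift_majorant, coord_bound.
    rewrite <- (pow2_abs (u0 k)), <- (pow2_abs (v0 k)).
    pose proof (idx_ge1 k). pose proof (sqrt_a_sq k) as Hsq. pose proof (sqrt_a_nonneg k).
    pose proof (Rabs_pos (u0 k)). pose proof (Rabs_pos (v0 k)).
    set (n := idx k) in *. set (s := sqrt (a k)) in *.
    set (u := Rabs (u0 k)) in *. set (v := Rabs (v0 k)) in *.
    assert (Hn : n ^ 2 <= n ^ 4).
    { assert (1 <= n ^ 2) by nra. replace (n ^ 4) with (n ^ 2 * n ^ 2) by ring. nra. }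
    assert (2 * (n ^ 2 * s * u) <= n ^ 4 * a k + u ^ 2)
      by (rewrite <- Hsq; pose proof (pow2_ge_0 (n ^ 2 * s - u)); nra).
    assert (2 * (n ^ 2 * s * v) <= n ^ 4 * a k + v ^ 2)
      by (rewrite <- Hsq; pose proof (pow2_ge_0 (n ^ 2 * s - v)); nra).
    assert (n ^ 2 * a k * T <= n ^ 4 * a k * T)
      by (apply Rmult_le_compat_r; [lra|]; apply Rmult_le_compat_r; [pose proof (a_pos k)|]; lra).
    replace (n ^ 2 * s * (u + s * T + (v + s * T) + 2 * s * T))
      with (n ^ 2 * s * u + n ^ 2 * s * v + 4 * (n ^ 2 * a k * T)) by (rewrite <- Hsq; ring).
    nra.
  - apply ex_series_Rplus; [now apply ex_series_scal_r|].
    now apply ex_series_Rplus.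
Qed.

Lemma Rabs_F1_term_le x (u v : nat -> R) k A B :
  Rabs (u k) <= A -> Rabs (v k) <= B -> Rabs (F1_term x u v k) <= idx k * sqrt (a k) * (A + B).
Proof.
  intros Hu Hv. unfold F1_term.
  pose proof (idx_ge1 k). pose proof (sqrt_a_nonneg k).
  rewrite Rabs_mult, Rabs_pos_eq by (apply Rmult_le_pos; lra).
  apply Rmult_le_compat_l; [apply Rmult_le_pos; lra|].
  eapply Rle_trans; [apply Rabs_triang|]. rewrite !Rabs_mult.
  pose proof (Rabs_sin_le_1 (idx k * x)). pose proof (Rabs_cos_le_1 (idx k * x)).
  pose proof (Rabs_pos (sin (idx k * x))). pose proof (Rabs_pos (cos (idx k * x))).
  pose proof (Rabs_pos (u k)). pose proof (Rabs_pos (v k)). nra.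
Qed.

Lemma Rabs_F1_term_le_majorant x (u v : nat -> R) u0 v0 T k : 0 <= T ->
  Rabs (u k) <= coord_bound u0 T k -> Rabs (v k) <= coord_bound v0 T k ->
  Rabs (F1_term x u v k) <= drift_majorant u0 v0 T k.
Proof.
  intros HT Hu Hv. eapply Rle_trans; [exact (Rabs_F1_term_le x u v k _ _ Hu Hv)|].
  unfold drift_majorant.
  pose proof (idx_ge1 k). pose proof (sqrt_a_nonneg k).
  pose proof (coord_bound_nonneg u0 T k HT). pose proof (coord_bound_nonneg v0 T k HT).
  set (A := coord_bound u0 T k + coord_bound v0 T k) in *.
  set (s := sqrt (a k)) in *. set (n := idx k) in *.
  assert (0 <= s * A) by (apply Rmult_le_pos; unfold A; lra).
  assert (n * (s * A) <= n * n * (s * A)) by (apply Rmult_le_compat_r; nra).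
  assert (0 <= n * n * (s * (s * T))) by (repeat apply Rmult_le_pos; lra).
  nra.
Qed.

Lemma Rabs_F1_term_sub_le x y (u u' v v' : nat -> R) k A B E delta :
  Rabs (x - y) <= E -> Rabs (u k) <= A -> Rabs (v k) <= B ->
  Rabs (u k - u' k) <= delta -> Rabs (v k - v' k) <= delta ->
  Rabs (F1_term x u v k - F1_term y u' v' k)
    <= idx k * sqrt (a k) * (idx k * E * (A + B) + 2 * delta).
Proof.
  intros Hxy Hu Hv Hdu Hdv. unfold F1_term.
  pose proof (idx_ge1 k). pose proof (sqrt_a_nonneg k).
  set (n := idx k) in *.
  replace (n * sqrt (a k) * (sin (n * x) * u k + cos (n * x) * v k)
           - n * sqrt (a k) * (sin (n * y) * u' k + cos (n * y) * v' k))
    with (n * sqrt (a k) * ((sin (n * x) - sin (n * y)) * u k + sin (n * y) * (u k - u' k)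
                            + ((cos (n * x) - cos (n * y)) * v k + cos (n * y) * (v k - v' k)))) by ring.
  rewrite Rabs_mult, (Rabs_pos_eq (n * _)) by (apply Rmult_le_pos; lra).
  apply Rmult_le_compat_l; [apply Rmult_le_pos; lra|].
  assert (Hnxy : Rabs (n * x - n * y) <= n * E).
  { rewrite <- Rmult_minus_distr_l, Rabs_mult, Rabs_pos_eq by lra. apply Rmult_le_compat_l; lra. }
  assert (Hsin := Rle_trans _ _ _ (Rabs_sin_sub_le (n * x) (n * y)) Hnxy).
  assert (Hcos := Rle_trans _ _ _ (Rabs_cos_sub_le (n * x) (n * y)) Hnxy).
  pose proof (Rabs_sin_le_1 (n * y)). pose proof (Rabs_cos_le_1 (n * y)).
  set (p1 := (sin (n * x) - sin (n * y)) * u k). set (p2 := sin (n * y) * (u k - u' k)).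
  set (p3 := (cos (n * x) - cos (n * y)) * v k). set (p4 := cos (n * y) * (v k - v' k)).
  assert (Rabs p1 <= n * E * A) by (unfold p1; rewrite Rabs_mult; apply Rmult_le_compat; auto using Rabs_pos).
  assert (Rabs p2 <= 1 * delta) by (unfold p2; rewrite Rabs_mult; apply Rmult_le_compat; auto using Rabs_pos).
  assert (Rabs p3 <= n * E * B) by (unfold p3; rewrite Rabs_mult; apply Rmult_le_compat; auto using Rabs_pos).
  assert (Rabs p4 <= 1 * delta) by (unfold p4; rewrite Rabs_mult; apply Rmult_le_compat; auto using Rabs_pos).
  pose proof (Rabs_triang (p1 + p2) (p3 + p4)).
  pose proof (Rabs_triang p1 p2). pose proof (Rabs_triang p3 p4).
  lra.
Qed.

Lemma Rabs_F2_le x k : Rabs (F2 a x k) <= sqrt (a k).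
Proof.
  unfold F2. rewrite Rabs_mult, Rabs_pos_eq by auto.
  pose proof (Rabs_cos_le_1 (idx k * x)). pose proof (sqrt_a_nonneg k). nra.
Qed.

Lemma Rabs_F3_le x k : Rabs (F3 a x k) <= sqrt (a k).
Proof.
  unfold F3. rewrite Rabs_Ropp, Rabs_mult, Rabs_pos_eq by auto.
  pose proof (Rabs_sin_le_1 (idx k * x)). pose proof (sqrt_a_nonneg k). nra.
Qed.

Lemma Rabs_F2_sub_le x y k : Rabs (F2 a x k - F2 a y k) <= sqrt (a k) * idx k * Rabs (x - y).
Proof.
  unfold F2. rewrite <- Rmult_minus_distr_l, Rabs_mult, Rabs_pos_eq, Rmult_assoc by auto.
  apply Rmult_le_compat_l; auto. eapply Rle_trans; [apply Rabs_cos_sub_le|].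
  rewrite <- Rmult_minus_distr_l, Rabs_mult, (Rabs_pos_eq (idx k)); [lra|].
  pose proof (idx_ge1 k); lra.
Qed.

Lemma Rabs_F3_sub_le x y k : Rabs (F3 a x k - F3 a y k) <= sqrt (a k) * idx k * Rabs (x - y).
Proof.
  unfold F3. replace (- (sqrt (a k) * sin (idx k * x)) - - (sqrt (a k) * sin (idx k * y)))
    with (sqrt (a k) * (sin (idx k * y) - sin (idx k * x))) by ring.
  rewrite Rabs_mult, Rabs_pos_eq, Rmult_assoc, (Rabs_minus_sym x) by auto.
  apply Rmult_le_compat_l; auto. eapply Rle_trans; [apply Rabs_sin_sub_le|].
  rewrite <- Rmult_minus_distr_l, Rabs_mult, (Rabs_pos_eq (idx k)); [lra|].
  pose proof (idx_ge1 k); lra.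
Qed.

Lemma solution_coord_bound P beta x0 u0' v0' X U V u0 v0 T :
  is_solution a P beta x0 u0' v0' X U V ->
  (forall k, Rabs (u0' k) <= Rabs (u0 k)) -> (forall k, Rabs (v0' k) <= Rabs (v0 k)) ->
  forall t k, 0 <= t <= T ->
  Rabs (U t k) <= coord_bound u0 T k /\ Rabs (V t k) <= coord_bound v0 T k.
Proof.
  intros (_ & _ & _ & _ & _ & HU & HV) Hu Hv t k Ht.
  destruct (HU t k (proj1 Ht)) as [HUi ->]. destruct (HV t k (proj1 Ht)) as [HVi ->].
  unfold coord_bound. pose proof (sqrt_a_nonneg k).
  assert (t * sqrt (a k) <= sqrt (a k) * T) by nra.
  split; (eapply Rle_trans; [apply Rabs_add_RInt_le with (M := sqrt (a k)); auto; [lra|]|]).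
  - intros s _. eapply Rle_trans; [apply Rabs_proj_coord_le|apply Rabs_F2_le].
  - specialize (Hu k). lra.
  - intros s _. eapply Rle_trans; [apply Rabs_proj_coord_le|apply Rabs_F3_le].
  - specialize (Hv k). lra.
Qed.

Lemma solution_F1_bound P beta x0 u0' v0' X U V u0 v0 T : 0 <= T ->
  is_solution a P beta x0 u0' v0' X U V ->
  (forall k, Rabs (u0' k) <= Rabs (u0 k)) -> (forall k, Rabs (v0' k) <= Rabs (v0 k)) ->
  ex_series (drift_majorant u0 v0 T) ->
  forall t, 0 <= t <= T ->
  ex_series (F1_term (X t) (U t) (V t)) /\
  Rabs (F1 a (X t) (U t) (V t)) <= Series (drift_majorant u0 v0 T).
Proof.
  intros HT Hsol Hu Hv Hm t Ht. apply Series_abs_le; auto.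
  intro k. destruct (solution_coord_bound _ _ _ _ _ _ _ _ u0 v0 T Hsol Hu Hv t k Ht).
  now apply Rabs_F1_term_le_majorant.
Qed.

Lemma Series_sq_diff_le (W W' w0 : nat -> R) N T t E :
  in_l2 w0 -> 0 <= t <= T -> 0 <= E ->
  (forall k, (k < N)%nat -> Rabs (W k - W' k) <= t * (sqrt (a k) * idx k * E)) ->
  (forall k, (N <= k)%nat -> W' k = 0) ->
  (forall k, Rabs (W k) <= coord_bound w0 T k) ->
  Series (fun k => (W' k - W k) ^ 2)
    <= Series (fun k => idx k ^ 4 * a k) * (T * E) ^ 2
       + Series (tail N (fun k => coord_bound w0 T k ^ 2)).
Proof.
  intros Hw Ht HE Hlt Hge Hbound.
  eapply Rle_trans; [apply Rle_abs|].
  apply Series_abs_le_scal_plus; auto using ex_series_tail, ex_series_coord_bound_sq.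
  intro k. rewrite Rabs_pos_eq by apply pow2_ge_0.
  pose proof (idx_ge1 k). pose proof (a_pos k). pose proof (sqrt_a_nonneg k).
  assert (Hq : 0 <= idx k ^ 4 * a k * (T * E) ^ 2).
  { apply Rmult_le_pos; [apply Rmult_le_pos; [apply pow_le|]|apply pow2_ge_0]; lra. }
  destruct (Nat.lt_ge_cases k N) as [Hk|Hk].
  - rewrite tail_lt, Rplus_0_r by auto.
    rewrite <- pow2_abs, Rabs_minus_sym.
    assert (Hd : Rabs (W k - W' k) <= T * (sqrt (a k) * idx k * E)).
    { eapply Rle_trans; [now apply Hlt|]. apply Rmult_le_compat_r; [|lra].
      apply Rmult_le_pos; [apply Rmult_le_pos|]; lra. }
    eapply Rle_trans; [apply pow_incr; split; [apply Rabs_pos|exact Hd]|].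
    pose proof (sqrt_a_sq k) as Hsq. set (s := sqrt (a k)) in *. set (n := idx k) in *.
    replace ((T * (s * n * E)) ^ 2) with (n ^ 2 * a k * (T * E) ^ 2) by (rewrite <- Hsq; ring).
    apply Rmult_le_compat_r; [apply pow2_ge_0|]. apply Rmult_le_compat_r; [lra|].
    assert (1 <= n ^ 2) by nra. replace (n ^ 4) with (n ^ 2 * n ^ 2) by ring. nra.
  - rewrite tail_ge, Hge by auto.
    replace ((0 - W k) ^ 2) with (Rabs (W k) ^ 2) by (rewrite pow2_abs; ring).
    assert (Rabs (W k) ^ 2 <= coord_bound w0 T k ^ 2) by (apply pow_incr; split; auto using Rabs_pos).
    lra.
Qed.

Definition x_error (u0 v0 : nat -> R) (T : R) (N : nat) : R :=
  2 * T * Series (tail N (drift_majorant u0 v0 T))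
    * exp ((2 * Series (drift_majorant u0 v0 T) + 1) * T).

Definition truncation_error (u0 v0 : nat -> R) (T : R) (N : nat) : R :=
  x_error u0 v0 T N ^ 2 * (1 + 2 * Series (fun k => idx k ^ 4 * a k) * T ^ 2)
  + Series (tail N (fun k => coord_bound u0 T k ^ 2))
  + Series (tail N (fun k => coord_bound v0 T k ^ 2)).

Lemma is_lim_seq_truncation_error u0 v0 T : 0 <= T -> in_l2 u0 -> in_l2 v0 ->
  is_lim_seq (truncation_error u0 v0 T) 0.
Proof.
  intros HT Hu Hv.
  assert (Hx : is_lim_seq (x_error u0 v0 T) 0).
  { unfold x_error. set (K := exp _).
    replace 0 with (2 * T * 0 * K) by ring.
    apply is_lim_seq_mult'; [|apply is_lim_seq_const].
    apply is_lim_seq_mult'; [apply is_lim_seq_const|].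
    apply is_lim_seq_Series_tail. now apply ex_series_drift_majorant. }
  replace 0 with (0 * 0 * (1 + 2 * Series (fun k => idx k ^ 4 * a k) * T ^ 2) + 0 + 0) by ring.
  unfold truncation_error.
  apply is_lim_seq_plus'; [apply is_lim_seq_plus'|].
  - apply is_lim_seq_mult'; [|apply is_lim_seq_const].
    apply (is_lim_seq_ext (fun N => x_error u0 v0 T N * x_error u0 v0 T N)); [intro; ring|].
    now apply is_lim_seq_mult'.
  - apply is_lim_seq_Series_tail. now apply ex_series_coord_bound_sq.
  - apply is_lim_seq_Series_tail. now apply ex_series_coord_bound_sq.
Qed.

Section Comparison.

Variables (beta : R -> R) (x0 : R) (u0 v0 : nat -> R).
Hypotheses (u0_l2 : in_l2 u0) (v0_l2 : in_l2 v0).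
Variables (X : R -> R) (U V : R -> nat -> R).
Hypothesis Y_sol : is_solution a None beta x0 u0 v0 X U V.
Variables (N : nat) (XN : R -> R) (UN VN : R -> nat -> R).
Hypothesis YN_sol : is_solution a (Some N) beta x0 (trunc N u0) (trunc N v0) XN UN VN.

Lemma solution_coord_sub_le r k M : (k < N)%nat -> 0 <= r ->
  (forall s, 0 <= s <= r -> Rabs (X s - XN s) <= M) ->
  Rabs (U r k - UN r k) <= r * (sqrt (a k) * idx k * M) /\
  Rabs (V r k - VN r k) <= r * (sqrt (a k) * idx k * M).
Proof.
  intros Hk Hr HM.
  destruct Y_sol as (_ & _ & _ & _ & _ & HU & HV).
  destruct YN_sol as (_ & _ & _ & _ & _ & HUN & HVN).
  destruct (HU r k Hr) as [HUi ->]. destruct (HUN r k Hr) as [HUNi ->].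
  destruct (HV r k Hr) as [HVi ->]. destruct (HVN r k Hr) as [HVNi ->].
  assert (Hb : (k <? N)%nat = true) by (apply Nat.ltb_lt; auto).
  unfold proj_coord, trunc in *. rewrite Hb in *.
  assert (HL : 0 <= sqrt (a k) * idx k) by (pose proof (idx_ge1 k); pose proof (sqrt_a_nonneg k); nra).
  rewrite !Rminus_plus_l_l.
  split; apply Rabs_RInt_sub_le; auto; intros s Hs.
  - eapply Rle_trans; [apply Rabs_F2_sub_le|]. apply Rmult_le_compat_l; auto.
  - eapply Rle_trans; [apply Rabs_F3_sub_le|]. apply Rmult_le_compat_l; auto.
Qed.

Lemma trunc_solution_coord_ge r k : (N <= k)%nat -> 0 <= r -> UN r k = 0 /\ VN r k = 0.
Proof.
  intros Hk Hr. destruct YN_sol as (_ & _ & _ & _ & _ & HUN & HVN).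
  destruct (HUN r k Hr) as [_ ->]. destruct (HVN r k Hr) as [_ ->].
  rewrite !trunc_ge by auto.
  rewrite (RInt_ext (fun s => proj_coord (Some N) k (F2 a (XN s) k)) (fun _ => 0)),
    (RInt_ext (fun s => proj_coord (Some N) k (F3 a (XN s) k)) (fun _ => 0))
    by (intros; now apply proj_coord_ge).
  rewrite RInt_const. change (scal (r - 0) 0) with ((r - 0) * 0). split; ring.
Qed.

Variable T : R.
Hypothesis T_nonneg : 0 <= T.

Local Notation m := (drift_majorant u0 v0 T).

Let ex_series_m : ex_series m := ex_series_drift_majorant u0 v0 T T_nonneg u0_l2 v0_l2.

Lemma F1_sub_le G lam r : 0 <= lam -> 0 <= G ->
  (forall s, 0 <= s <= T -> Rabs (X s - XN s) <= G * exp (lam * s)) -> 0 <= r <= T ->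
  Rabs (F1 a (X r) (U r) (V r) - F1 a (XN r) (UN r) (VN r))
    <= Series m * G * exp (lam * r) + Series (tail N m).
Proof.
  intros Hlam HG He Hr.
  set (E := G * exp (lam * r)).
  assert (HE : 0 <= E) by (unfold E; pose proof (exp_pos (lam * r)); nra).
  assert (HM : forall s, 0 <= s <= r -> Rabs (X s - XN s) <= E).
  { intros s Hs. eapply Rle_trans; [apply He; lra|]. unfold E.
    apply Rmult_le_compat_l, exp_le; nra. }
  assert (Hu : forall k, Rabs (u0 k) <= Rabs (u0 k)) by (intro; apply Rle_refl).
  assert (Hv : forall k, Rabs (v0 k) <= Rabs (v0 k)) by (intro; apply Rle_refl).
  destruct (solution_F1_bound _ _ _ _ _ _ _ _ u0 v0 T T_nonneg Y_sol Hu Hv ex_series_m r Hr)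
    as [HY _].
  destruct (solution_F1_bound _ _ _ _ _ _ _ _ u0 v0 T T_nonneg YN_sol (Rabs_trunc_le N u0)
              (Rabs_trunc_le N v0) ex_series_m r Hr) as [HYN _].
  rewrite !F1_Series, <- Series_minus by auto.
  replace (Series m * G * exp (lam * r)) with (Series m * E) by (unfold E; ring).
  apply Series_abs_le_scal_plus; auto using ex_series_tail.
  intro k.
  destruct (solution_coord_bound _ _ _ _ _ _ _ _ u0 v0 T Y_sol Hu Hv r k Hr) as [HUb HVb].
  assert (Hmk : 0 <= m k) by now apply drift_majorant_nonneg.
  destruct (Nat.lt_ge_cases k N) as [Hk|Hk].
  - rewrite tail_lt, Rplus_0_r by auto.
    destruct (solution_coord_sub_le r k E Hk (proj1 Hr) HM) as [HdU HdV].
    assert (Hdelta : r * (sqrt (a k) * idx k * E) <= T * (sqrt (a k) * idx k * E)).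
    { apply Rmult_le_compat_r; [|lra].
      pose proof (idx_ge1 k); pose proof (sqrt_a_nonneg k).
      apply Rmult_le_pos; [apply Rmult_le_pos|]; lra. }
    eapply Rle_trans.
    + apply (Rabs_F1_term_sub_le _ _ _ _ _ _ k _ _ E (T * (sqrt (a k) * idx k * E))
               (HM r ltac:(lra)) HUb HVb); eapply Rle_trans; eauto.
    + right. unfold drift_majorant. ring.
  - rewrite tail_ge by auto.
    destruct (trunc_solution_coord_ge r k Hk (proj1 Hr)) as [HU0 HV0].
    replace (F1_term (XN r) (UN r) (VN r) k) with 0 by (unfold F1_term; rewrite HU0, HV0; ring).
    rewrite Rminus_0_r.
    assert (Rabs (F1_term (X r) (U r) (V r) k) <= m k) by now apply Rabs_F1_term_le_majorant.
    pose proof (Rmult_le_pos _ _ Hmk HE). lra.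
Qed.

Lemma X_sub_RInt t : 0 <= t ->
  let D := fun s => F1 a (X s) (U s) (V s) - F1 a (XN s) (UN s) (VN s) in
  ex_RInt D 0 t /\ X t - XN t = RInt D 0 t.
Proof.
  intros Ht D.
  destruct Y_sol as (_ & _ & _ & _ & HX & _). destruct YN_sol as (_ & _ & _ & _ & HXN & _).
  destruct (HX t Ht) as [HXi ->]. destruct (HXN t Ht) as [HXNi ->].
  split; [exact (ex_RInt_minus (V := R_NormedModule) _ _ 0 t HXi HXNi)|].
  unfold D. rewrite (RInt_minus (V := R_CompleteNormedModule)) by auto.
  change minus with Rminus. simpl. ring.
Qed.

Lemma X_error_le t : 0 <= t <= T -> Rabs (X t - XN t) <= x_error u0 v0 T N.
Proof.
  intros Ht.
  set (D := fun s => F1 a (X s) (U s) (V s) - F1 a (XN s) (UN s) (VN s)).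
  assert (Hm : forall k, 0 <= m k) by (intro; now apply drift_majorant_nonneg).
  assert (HC : 0 <= Series m) by now apply Series_nonneg.
  assert (Htau : 0 <= Series (tail N m))
    by (apply Series_nonneg; auto using ex_series_tail; intro k; now apply tail_le).
  assert (HeD : forall s, 0 <= s <= T -> ex_RInt D 0 s /\ X s - XN s = RInt D 0 s)
    by (intros s Hs; apply X_sub_RInt; lra).
  assert (He0 : forall s, 0 <= s <= T -> Rabs (X s - XN s) <= T * (2 * Series m)).
  { intros s Hs. destruct (HeD s Hs) as [HDi ->].
    eapply Rle_trans; [apply (abs_RInt_le_const _ 0 s (2 * Series m)); auto; [lra|]|nra].
    intros r Hr. unfold D, Rminus. eapply Rle_trans; [apply Rabs_triang|]. rewrite Rabs_Ropp.
    assert (Hr' : 0 <= r <= T) by lra.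
    destruct (solution_F1_bound _ _ _ _ _ _ _ _ u0 v0 T T_nonneg Y_sol (fun k => Rle_refl _)
                (fun k => Rle_refl _) ex_series_m r Hr') as [_ H1].
    destruct (solution_F1_bound _ _ _ _ _ _ _ _ u0 v0 T T_nonneg YN_sol (Rabs_trunc_le N u0)
                (Rabs_trunc_le N v0) ex_series_m r Hr') as [_ H2].
    lra. }
  eapply Rle_trans.
  - apply (weighted_gronwall T (Series m) (Series (tail N m)) (fun s => X s - XN s) D
             T_nonneg HC Htau HeD) with (G0 := T * (2 * Series m)); auto; [|nra].
    intros G HG HeG r Hr. now apply F1_sub_le; [lra| | |].
  - unfold x_error. apply Rmult_le_compat_l; [nra|]. apply exp_le. nra.
Qed.

Lemma Hdist2_truncation_le t : 0 <= t <= T ->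
  Hdist2 (XN t) (UN t) (VN t) (X t) (U t) (V t) <= truncation_error u0 v0 T N.
Proof.
  intros Ht.
  set (E := x_error u0 v0 T N).
  assert (HE : forall s, 0 <= s <= T -> Rabs (X s - XN s) <= E) by exact X_error_le.
  assert (HE0 : 0 <= E) by (eapply Rle_trans; [apply Rabs_pos|exact (HE t Ht)]).
  assert (HUV : forall k, (k < N)%nat ->
            Rabs (U t k - UN t k) <= t * (sqrt (a k) * idx k * E) /\
            Rabs (V t k - VN t k) <= t * (sqrt (a k) * idx k * E))
    by (intros k Hk; apply solution_coord_sub_le; auto; [lra|]; intros s Hs; apply HE; lra).
  assert (Hbound := solution_coord_bound _ _ _ _ _ _ _ _ u0 v0 T Y_sol
                      (fun k => Rle_refl _) (fun k => Rle_refl _) t).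
  assert (HX : (XN t - X t) ^ 2 <= E ^ 2).
  { rewrite <- pow2_abs, Rabs_minus_sym. apply pow_incr. split; auto using Rabs_pos. }
  assert (HU := Series_sq_diff_le (U t) (UN t) u0 N T t E u0_l2 Ht HE0
                  (fun k Hk => proj1 (HUV k Hk))
                  (fun k Hk => proj1 (trunc_solution_coord_ge t k Hk (proj1 Ht)))
                  (fun k => proj1 (Hbound k Ht))).
  assert (HV := Series_sq_diff_le (V t) (VN t) v0 N T t E v0_l2 Ht HE0
                  (fun k Hk => proj2 (HUV k Hk))
                  (fun k Hk => proj2 (trunc_solution_coord_ge t k Hk (proj1 Ht)))
                  (fun k => proj2 (Hbound k Ht))).
  unfold Hdist2, truncation_error. fold E.
  replace (E ^ 2 * (1 + 2 * Series (fun k => idx k ^ 4 * a k) * T ^ 2))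
    with (E ^ 2 + 2 * (Series (fun k => idx k ^ 4 * a k) * (T * E) ^ 2)) by ring.
  lra.
Qed.

End Comparison.
End Drift.

Theorem lemma1
  (a : nat -> R)
  (ha_pos : forall k, 0 < a k)
  (ha_sum : ex_series (fun k => (1 + idx k ^ 2) ^ 5 * (a k) ^ 2))
  (x0 : R) (u0 v0 : nat -> R) (hy : in_H x0 u0 v0)
  (Omega : Type) (beta : Omega -> R -> R)
  (hbeta0 : forall w, beta w 0 = 0)
  (hbeta_cont : forall w t, continuous (beta w) t)
  (X : Omega -> R -> R) (U V : Omega -> R -> nat -> R)
  (hY : forall w, is_solution a None (beta w) x0 u0 v0 (X w) (U w) (V w))
  (XN : nat -> Omega -> R -> R) (UN VN : nat -> Omega -> R -> nat -> R)
  (hYN : forall N w, (1 <= N)%nat ->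
     is_solution a (Some N) (beta w) x0 (trunc N u0) (trunc N v0)
                 (XN N w) (UN N w) (VN N w)) :
  forall T, 0 < T -> forall w,
    forall eps, 0 < eps -> exists N0 : nat, forall N, (N0 <= N)%nat ->
      forall t, 0 <= t <= T ->
        Hdist2 (XN N w t) (UN N w t) (VN N w t) (X w t) (U w t) (V w t) < eps.
Proof.
  intros T HT w eps Heps.
  destruct hy as [u0_l2 v0_l2].
  assert (Ha4 := ex_series_idx4_mul a (fun k => Rlt_le _ _ (ha_pos k)) ha_sum).
  assert (Hlim := is_lim_seq_truncation_error a ha_pos Ha4 u0 v0 T (Rlt_le _ _ HT) u0_l2 v0_l2).
  apply is_lim_seq_spec in Hlim. destruct (Hlim (mkposreal eps Heps)) as [N0 HN0].
  exists (max 1 N0). intros N HN t Ht.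
  eapply Rle_lt_trans.
  - apply (Hdist2_truncation_le a ha_pos Ha4 (beta w) x0 u0 v0 u0_l2 v0_l2 (X w) (U w) (V w) (hY w)
             N (XN N w) (UN N w) (VN N w) (hYN N w ltac:(lia)) T (Rlt_le _ _ HT) t Ht).
  - specialize (HN0 N ltac:(lia)). simpl in HN0. rewrite Rminus_0_r in HN0.
    exact (Rle_lt_trans _ _ _ (Rle_abs _) HN0).
Qed.
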